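(* Let $F$ be a uniformly recurrent set. Then every $F$-thin bifix code $X\subset F$ is finite, and every finite bifix code $X\subset F$ is contained in a finite $F$-maximal bifix code $Y\subset F$.
   Context: $A$ is a finite alphabet. $F\subset A^*$ is uniformly recurrent if it is nonempty, closed under factors, every $w\in F$ has some letter $a$ with $wa\in F$, and for every $u\in F$ there is $n\ge1$ such that $u$ is a factor of every word of $F\cap A^n$. A bifix code is a set of nonempty words none of which is a proper prefix or proper suffix of another. $X\subset F$ is $F$-thin if some word of $F$ is not a factor of any word of $X$; it is $F$-maximal bifix if not properly contained in any bifix code contained in $F$. *)

From mathcomp Require Import all_boot.
Set Implicit Arguments. Unset Strict Implicit. Unset Printing Implicit Defensive.

Section Words.
Variable A : finType.
Definition wset := seq A -> Prop.

Definition wsubset (X Y : wset) : Prop := forall w, X w -> Y w.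

Definition wfinite (X : wset) : Prop :=
  exists s : seq (seq A), forall w, X w <-> w \in s.

Definition factor (u w : seq A) : bool := infix u w.

Definition uniformly_recurrent (F : wset) : Prop :=
  [/\ exists w, F w,
      (forall u w, F w -> factor u w -> F u),
      (forall w, F w -> exists a : A, F (rcons w a)) &
      (forall u, F u -> exists n, 1 <= n /\
          forall w, F w -> size w = n -> factor u w)].

Definition proper_prefix (u w : seq A) : bool := prefix u w && (u != w).
Definition proper_suffix (u w : seq A) : bool := suffix u w && (u != w).

Definition bifix_code (X : wset) : Prop :=
  (forall x, X x -> x <> [::]) /\
  (forall x y, X x -> X y -> ~~ proper_prefix x y /\ ~~ proper_suffix x y).

Definition F_thin (F X : wset) : Prop :=
  exists w, F w /\ forall x, X x -> ~~ factor w x.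

Definition F_maximal_bifix (F X : wset) : Prop :=
  [/\ bifix_code X, wsubset X F &
      forall Y, bifix_code Y -> wsubset Y F -> wsubset X Y -> wsubset Y X].
End Words.

From mathcomp Require Import all_boot.
From mathcomp Require Import boolp zify.
Set Implicit Arguments. Unset Strict Implicit. Unset Printing Implicit Defensive.

(* If a word w of F occurs in every word of F of length n but in no word of X,
   the words of X are shorter than n.

   A finite bifix code X in F is completed greedily: by increasing length, a word
   of F is added whenever the code stays bifix.  Let
   L bound the lengths in X and let y in Y be long.  Every position p of y with
   p + L < |y| starts exactly one factor of y lying in Y and every position q > L
   ends exactly one: the suffix (resp. prefix) of y at that position is longer
   than L, so if it is not in Y then by maximality one of its proper prefixes
   (resp. suffixes) is, the other side being excluded as y is in Y.  Hence the
   number of these factors crossing a cut c is constant for L <= c <= |y| - L.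
   By uniform recurrence the prefix of length L + 1 of y reoccurs at some j >= 1
   within bounded distance; the factors inside both windows correspond, so the
   crossings at L + 1 and at j + L + 1 differ by those starting before j, among
   them y itself.  Thus |y| is bounded and Y is finite. *)

Section Crossing.
Variable occ : nat -> nat -> Prop.
Variables n L : nat.
Hypothesis occ_lt : forall p q, occ p q -> p < q.
Hypothesis occ_end_uniq : forall p q q', occ p q -> occ p q' -> q = q'.
Hypothesis occ_start_uniq : forall p p' q, occ p q -> occ p' q -> p = p'.
Hypothesis occ_start : forall p, p + L < n -> exists q, occ p q.
Hypothesis occ_end : forall q, L < q <= n -> exists p, occ p q.
Hypothesis occ_full : occ 0 n.

Definition ends_after c p := `[< exists2 q, c < q & occ p q >].
Definition crossing c := count (ends_after c) (iota 0 c).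

Lemma ends_afterN c p : p + L < n ->
  ~~ ends_after c p = `[< exists2 q, q <= c & occ p q >].
Proof.
move=> /occ_start [q oq]; apply/negP/asboolP => [nafter|[q' q'c oq'] /asboolP [q'' cq'' oq'']].
  by exists q => //; rewrite leqNgt; apply/negP => cq; apply: nafter; apply/asboolP; exists q.
by move: cq''; rewrite (occ_end_uniq oq'' oq') ltnNge q'c.
Qed.

Lemma crossingS c : L <= c -> c + L < n -> crossing c.+1 = crossing c.
Proof.
move=> Lc cLn.
have [p0 o0] : exists p, occ p c.+1 by apply: occ_end; lia.
have [q0 oc] := occ_start cLn.
have p0c : p0 \in iota 0 c.+1 by rewrite mem_iota add0n; exact: occ_lt o0.
have after_c : {in iota 0 c.+1, ends_after c =1 predU (ends_after c.+1) (pred1 p0)}.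
  move=> p _ /=; apply/asboolP/orP => [[q cq oq]|[/asboolP [q cq oq]|/eqP ->]].
  - case: (ltngtP q c.+1) => [|lt_c|eq_q]; first by rewrite ltnS leqNgt cq.
      by left; apply/asboolP; exists q.
    by right; apply/eqP; apply: (occ_start_uniq oq); rewrite eq_q.
  - by exists q => //; exact: ltnW.
  - by exists c.+1.
have not_after_p0 : ~~ ends_after c.+1 p0.
  by apply/asboolP => -[q cq oq]; move: cq; rewrite (occ_end_uniq oq o0) ltnn.
have /eqP := count_predUI (ends_after c.+1) (pred1 p0) (iota 0 c.+1).
rewrite -(eq_in_count after_c) (count_uniq_mem _ (iota_uniq _ _)) p0c.
rewrite (@eq_count _ (predI _ (pred1 p0)) pred0) ?count_pred0; last first.
  by move=> p /=; case: (eqVneq p p0) => [->|]; rewrite ?andbF // (negbTE not_after_p0).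
have -> : count (ends_after c) (iota 0 c.+1) = crossing c + 1.
  rewrite -addn1 iotaD count_cat /= addn0.
  by have -> : ends_after c c by apply/asboolP; exists q0 => //; exact: occ_lt oc.
rewrite /crossing; lia.
Qed.

Lemma no_repeated_window j K : L < K -> 0 < j -> j + K + L < n ->
  (forall p q, p < q <= K -> occ (j + p) (j + q) <-> occ p q) -> False.
Proof.
move=> LK j0 jKLn shift.
have crossing_const i : K + i + L < n -> crossing (K + i) = crossing K.
  by elim: i => [|i IH] iKLn; rewrite ?addn0 // addnS crossingS ?IH //; lia.
have inside : count (predC (ends_after (j + K))) (iota j K)
            = count (predC (ends_after K)) (iota 0 K).
  rewrite -[j]addn0 iotaDl count_map addn0; apply: eq_in_count => p.
  rewrite mem_iota add0n => pK /=; rewrite !ends_afterN; [|lia|lia].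
  apply/asboolP/asboolP => [[q qjK oq]|[q qK oq]].
    have jq : j + p < q := occ_lt oq.
    exists (q - j); first lia.
    by apply/shift; [lia|rewrite subnKC //; lia].
  have pq : p < q := occ_lt oq.
  by exists (j + q); [lia|apply/shift; rewrite ?pq].
have window : count (ends_after (j + K)) (iota j K) = crossing K.
  have := count_predC (ends_after (j + K)) (iota j K).
  have := count_predC (ends_after K) (iota 0 K).
  rewrite /crossing !size_iota inside => h1 h2.
  by apply/eqP; rewrite -(eqn_add2r (count (predC (ends_after K)) (iota 0 K))) h1 h2.
have start_crosses : 0 < count (ends_after (j + K)) (iota 0 j).
  rewrite -has_count; apply/hasP; exists 0; first by rewrite mem_iota.
  by apply/asboolP; exists n => //; lia.
have split_start : crossing (j + K) = count (ends_after (j + K)) (iota 0 j) + crossing K.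
  by rewrite {1}/crossing iotaD count_cat add0n window.
by move: (crossing_const j); rewrite [K + j]addnC split_start; lia.
Qed.
End Crossing.

Section Words.
Variable A : finType.
Implicit Types (u v w : seq A) (X Z : wset A).

Definition words_upto M : seq (seq A) :=
  [seq val t | k <- iota 0 M.+1, t <- enum {: k.-tuple A}].

Lemma mem_words_upto M w : size w <= M -> w \in words_upto M.
Proof.
move=> wM; apply/allpairsPdep; exists (size w), (in_tuple w).
by rewrite mem_iota mem_enum ltnS wM.
Qed.

Lemma wfinite_size_bounded X M : (forall w, X w -> size w <= M) -> wfinite X.
Proof.
move=> XM; exists [seq w <- words_upto M | `[< X w >]] => w.
rewrite mem_filter; split => [Xw|/andP [/asboolP //]].
by rewrite mem_words_upto ?XM // andbT; apply/asboolP.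
Qed.

Lemma wfinite_size_bound X : wfinite X -> exists M, forall w, X w -> size w <= M.
Proof.
by case=> s Xs; exists (\max_(x <- s) size x) => w /Xs ws; exact: leq_bigmax_seq.
Qed.

Lemma proper_prefix_size u w : proper_prefix u w -> size u < size w.
Proof.
case/andP => /prefixP [t ->]; rewrite size_cat.
by case: t => [|a t]; rewrite ?cats0 ?eqxx //= addnS ltnS leq_addr.
Qed.

Lemma proper_suffix_size u w : proper_suffix u w -> size u < size w.
Proof.
case/andP => /suffixP [t ->]; rewrite size_cat.
by case: t => [|a t]; rewrite ?eqxx //= addSn ltnS leq_addl.
Qed.

Lemma proper_prefix_take u w k : proper_prefix u (take k w) -> proper_prefix u w.
Proof.
move=> pp; have := proper_prefix_size pp; case/andP: pp => pre _ lt.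
rewrite /proper_prefix (prefix_trans pre (prefix_take _ _)) /=.
by apply: contraTneq lt => ->; rewrite -leqNgt size_take_min geq_minr.
Qed.

Lemma proper_suffix_drop u w k : proper_suffix u (drop k w) -> proper_suffix u w.
Proof.
move=> ps; have := proper_suffix_size ps; case/andP: ps => suf _ lt.
rewrite /proper_suffix (suffix_trans suf (suffix_drop _ _)) /=.
by apply: contraTneq lt => ->; rewrite -leqNgt size_drop leq_subr.
Qed.

Lemma bifix_prefix_eq Z u v : bifix_code Z -> Z u -> Z v -> prefix u v -> u = v.
Proof.
by case=> _ Zbif Zu Zv pre; have [/nandP [/negP|/negPn/eqP] //] := Zbif u v Zu Zv.
Qed.

Lemma bifix_suffix_eq Z u v : bifix_code Z -> Z u -> Z v -> suffix u v -> u = v.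
Proof.
by case=> _ Zbif Zu Zv suf; have [_ /nandP [/negP|/negPn/eqP] //] := Zbif u v Zu Zv.
Qed.

Lemma infix_window u w :
  infix u w -> exists2 j, j + size u <= size w & take (size u) (drop j w) = u.
Proof.
case/infixP => s1 [s2 ->]; exists (size s1); first by rewrite !size_cat leq_add2l leq_addr.
by rewrite drop_size_cat // take_size_cat.
Qed.

Definition slice (T : Type) p q (s : seq T) := drop p (take q s).

Lemma size_slice (T : Type) p q (s : seq T) : q <= size s -> size (slice p q s) = q - p.
Proof. by move=> qs; rewrite size_drop size_takel. Qed.

Lemma prefix_slice (T : eqType) p q q' (s : seq T) :
  p <= q -> q <= q' -> prefix (slice p q s) (slice p q' s).
Proof.
move=> pq qq'; rewrite /slice -(subnK pq) -(subnK (leq_trans pq qq')) -!take_drop.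
by rewrite -(take_takel _ (leq_sub2r p qq')) prefix_take.
Qed.

Lemma suffix_slice (T : eqType) p p' q (s : seq T) :
  p <= p' -> suffix (slice p' q s) (slice p q s).
Proof. by move=> pp'; rewrite /slice -(subnK pp') -drop_drop suffix_drop. Qed.

Lemma slice_shift (T : Type) j K p q (s : seq T) :
  q <= K -> take K (drop j s) = take K s -> slice (j + p) (j + q) s = slice p q s.
Proof.
move=> qK window; rewrite /slice addnC -drop_drop [j + q]addnC -take_drop.
by rewrite -(take_takel _ qK) window take_takel.
Qed.

Definition recurs_within (F : wset A) K B :=
  forall u, F u -> size u = K -> forall w, F w -> B <= size w -> factor u w.

Section Recurrence.
Variable F : wset A.
Hypothesis F_factor : forall u w, F w -> factor u w -> F u.
Hypothesis F_recurrent :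
  forall u, F u -> exists n, 1 <= n /\ forall w, F w -> size w = n -> factor u w.

Lemma recurrent_size_ge u : F u -> exists n, forall w, F w -> n <= size w -> factor u w.
Proof.
move=> /F_recurrent [n [_ rec]]; exists n => w Fw nw.
apply: infix_trans (infix_take w n); apply: rec; last exact: size_takel.
exact: F_factor Fw (infix_take _ _).
Qed.

Lemma uniform_recurrence K : exists B, recurs_within F K B.
Proof.
suff [B recB] : exists B, forall u, u \in words_upto K ->
    F u -> forall w, F w -> B <= size w -> factor u w.
  by exists B => u Fu uK; apply: recB => //; rewrite mem_words_upto ?uK.
elim: (words_upto K) => [|u s [B recB]]; first by exists 0.
case: (pselect (F u)) => [/recurrent_size_ge [n recu]|nFu].
  exists (maxn n B) => v; rewrite in_cons => /predU1P [-> _|vs Fv] w Fw.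
    by rewrite geq_max => /andP [nw _]; exact: recu.
  by rewrite geq_max => /andP [_ Bw]; exact: recB.
by exists B => v; rewrite in_cons => /predU1P [->|/recB].
Qed.

Lemma F_thin_finite X : wsubset X F -> F_thin F X -> wfinite X.
Proof.
move=> XF [w [Fw no_w]]; have [n rec] := recurrent_size_ge Fw.
apply: (@wfinite_size_bounded _ n) => x Xx; rewrite leqNgt; apply/negP => nx.
by have := no_w x Xx; rewrite (rec x (XF x Xx) (ltnW nx)).
Qed.
End Recurrence.

Section GreedyCompletion.
Variables F X : wset A.
Hypothesis X_bifix : bifix_code X.
Hypothesis X_F : wsubset X F.

(* Compatibility is only required in one direction: a word of X that is a proper
   prefix or suffix of w is ruled out by the last clause, as X is in greedy. *)
Definition greedy_admissible (Z : wset A) w : Prop :=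
  X w \/ [/\ F w, w <> [::],
    (forall x, X x -> ~~ proper_prefix w x /\ ~~ proper_suffix w x) &
    (forall v, proper_prefix v w || proper_suffix v w -> ~ Z v)].

Fixpoint greedy_upto k : wset A := fun w =>
  if k is k'.+1 then greedy_upto k' w \/ (size w = k /\ greedy_admissible (greedy_upto k') w)
  else False.

Definition greedy : wset A := fun w => greedy_upto (size w) w.

Lemma greedy_upto_size k w : greedy_upto k w -> size w <= k.
Proof. by elim: k => [|k IH] //= [/IH/leqW|[-> _]]. Qed.

Lemma greedy_uptoP k w : greedy_upto k w <-> size w <= k /\ greedy w.
Proof.
rewrite /greedy; elim: k => [|k IH] /=; first by split=> // -[]; rewrite leqn0 => /eqP ->.
split=> [[/IH [wk Gw]|[wk adm]]|[]]; first by split=> //; exact: leqW.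
  by rewrite wk; split=> //=; right.
move=> + Gw; rewrite leq_eqVlt => /predU1P [ek|wk]; first by rewrite ek in Gw.
by left; apply/IH.
Qed.

Lemma X_nil : ~ X [::].
Proof. by move/X_bifix.1. Qed.

Lemma greedyE w : greedy w <-> greedy_admissible greedy w.
Proof.
rewrite /greedy; case Ew: (size w) => [|k] /=.
  by move/eqP: Ew; rewrite size_eq0 => /eqP ->; split=> // -[/X_nil|[]].
have upto_k v : proper_prefix v w || proper_suffix v w -> greedy_upto k v <-> greedy v.
  move=> vw; have vk : size v <= k.
    by move: vw; rewrite -ltnS -Ew => /orP [/proper_prefix_size|/proper_suffix_size].
  by rewrite greedy_uptoP; split=> [[]|].
split=> [[/greedy_upto_size|[_ [Xw|[Fw wn Xok shortest]]]]|[Xw|[Fw wn Xok shortest]]].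
- by rewrite Ew ltnn.
- by left.
- by right; split=> // v vw /(upto_k _ vw); exact: shortest vw.
- by right; split=> //; left.
- by right; split=> //; right; split=> // v vw /(upto_k _ vw); exact: shortest vw.
Qed.

Lemma sub_greedy : wsubset X greedy.
Proof. by move=> w Xw; apply/greedyE; left. Qed.

Lemma greedy_F : wsubset greedy F.
Proof. by move=> w /greedyE [/X_F|[]]. Qed.

Lemma greedy_neq_nil w : greedy w -> w <> [::].
Proof. by move/greedyE=> [Xw wn|[]] //; move: Xw; rewrite wn; exact: X_nil. Qed.

Lemma greedy_bifix : bifix_code greedy.
Proof.
split=> [|x y Gx Gy]; first exact: greedy_neq_nil.
suff no_proper : ~ (proper_prefix x y || proper_suffix x y).
  by split; apply/negP => xy; apply: no_proper; rewrite xy ?orbT.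
move: Gy => /greedyE [Xy|[_ _ _ shortest]] xy; last exact: shortest xy Gx.
case/greedyE: Gx => [Xx|[_ _ Xok _]].
  by have [/negbTE pre /negbTE suf] := X_bifix.2 x y Xx Xy; rewrite pre suf in xy.
by have [/negbTE pre /negbTE suf] := Xok y Xy; rewrite pre suf in xy.
Qed.

Lemma greedy_maximal : F_maximal_bifix F greedy.
Proof.
split; [exact: greedy_bifix|exact: greedy_F|].
move=> Z Z_bifix ZF GZ z Zz; apply/greedyE; right; split.
- exact: ZF.
- exact: Z_bifix.1.
- by move=> x Xx; apply: Z_bifix.2 => //; apply/GZ/sub_greedy.
- move=> v vz /GZ Zv; have [pre suf] := Z_bifix.2 v z Zv Zz.
  by rewrite (negbTE pre) (negbTE suf) in vz.
Qed.

Variable L : nat.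
Hypothesis X_size : forall x, X x -> size x <= L.
Hypothesis F_factor : forall u w, F w -> factor u w -> F u.

Lemma greedy_long u : F u -> L < size u ->
  greedy u <-> forall v, proper_prefix v u || proper_suffix v u -> ~ greedy v.
Proof.
move=> Fu Lu; split=> [/greedyE [/X_size|[_ _ _ //]]|shortest]; first by rewrite leqNgt Lu.
apply/greedyE; right; split=> //; first by move=> u0; rewrite u0 in Lu.
move=> x /X_size xL.
by split; apply/negP; [move/proper_prefix_size|move/proper_suffix_size]; lia.
Qed.

Lemma greedy_longN u : F u -> L < size u -> ~ greedy u ->
  exists2 v, proper_prefix v u || proper_suffix v u & greedy v.
Proof.
move=> Fu Lu nGu; apply: contrapT => nex; apply/nGu/(greedy_long Fu Lu) => v vu Gv.
by apply: nex; exists v.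
Qed.

Section Intervals.
Variable y : seq A.

Definition greedy_interval p q := [/\ p < q, q <= size y & greedy (slice p q y)].

Lemma greedy_interval_lt p q : greedy_interval p q -> p < q.
Proof. by case. Qed.

Lemma greedy_interval_end_uniq p q q' :
  greedy_interval p q -> greedy_interval p q' -> q = q'.
Proof.
wlog le_qq' : q q' / q <= q' => [hw Ipq Ipq'|[pq qy Gq] [_ q'y Gq']].
  by case: (leqP q q') => [le|/ltnW le]; [exact: hw|symmetry; exact: hw].
have := bifix_prefix_eq greedy_bifix Gq Gq' (prefix_slice y (ltnW pq) le_qq').
by move/(congr1 size); rewrite !size_slice //; lia.
Qed.

Lemma greedy_interval_start_uniq p p' q :
  greedy_interval p q -> greedy_interval p' q -> p = p'.
Proof.
wlog le_pp' : p p' / p <= p' => [hw Ipq Ip'q|[pq qy Gp] [p'q _ Gp']].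
  by case: (leqP p p') => [le|/ltnW le]; [exact: hw|symmetry; exact: hw].
have := bifix_suffix_eq greedy_bifix Gp' Gp (suffix_slice q y le_pp').
by move/(congr1 size); rewrite !size_slice //; lia.
Qed.

Lemma greedy_interval_shift j K p q :
  j + K <= size y -> take K (drop j y) = take K y -> p < q <= K ->
  greedy_interval (j + p) (j + q) <-> greedy_interval p q.
Proof.
move=> jKy window /andP [pq qK]; rewrite /greedy_interval (slice_shift p qK window).
by split=> -[]; split=> //; lia.
Qed.

Hypothesis greedy_y : greedy y.
Hypothesis y_long : L < size y.

Lemma greedy_y_shortest v : proper_prefix v y || proper_suffix v y -> ~ greedy v.
Proof. exact: (greedy_long (greedy_F greedy_y) y_long).1 greedy_y v. Qed.

Lemma greedy_interval_start p : p + L < size y -> exists q, greedy_interval p q.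
Proof.
move=> pLy; set u := drop p y.
have Fu : F u by apply: F_factor (greedy_F greedy_y) (infix_drop _ _).
have Lu : L < size u by rewrite size_drop; lia.
case: (pselect (greedy u)) => [Gu|/(greedy_longN Fu Lu) [v /orP [vu|vu] Gv]].
- by exists (size y); split; rewrite /slice ?take_size //; lia.
- have v_pos : 0 < size v by rewrite lt0n size_eq0; apply/eqP/greedy_neq_nil.
  have := proper_prefix_size vu; rewrite size_drop => vy.
  exists (p + size v); split; [lia|lia|].
  suff -> : slice p (p + size v) y = v by [].
  by case/andP: vu => /prefixP [t ut] _; rewrite /slice addnC -take_drop -/u ut take_size_cat.
- by case: (greedy_y_shortest _ Gv); rewrite (proper_suffix_drop vu) orbT.
Qed.

Lemma greedy_interval_end q : L < q <= size y -> exists p, greedy_interval p q.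
Proof.
case/andP=> Lq qy; set u := take q y.
have Fu : F u by apply: F_factor (greedy_F greedy_y) (infix_take _ _).
have Lu : L < size u by rewrite size_takel.
case: (pselect (greedy u)) => [Gu|/(greedy_longN Fu Lu) [v /orP [vu|vu] Gv]].
- by exists 0; split; rewrite /slice ?drop0 //; lia.
- by case: (greedy_y_shortest _ Gv); rewrite (proper_prefix_take vu).
- have v_pos : 0 < size v by rewrite lt0n size_eq0; apply/eqP/greedy_neq_nil.
  have := proper_suffix_size vu; rewrite size_takel // => vq.
  exists (q - size v); split; [lia|lia|].
  suff -> : slice (q - size v) q y = v by [].
  case/andP: vu => /suffixP [t ut] _.
  by rewrite /slice -/u ut -(size_takel qy) -/u ut size_cat addnK drop_size_cat.
Qed.

Lemma greedy_interval_full : greedy_interval 0 (size y).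
Proof. by split; rewrite /slice ?take_size ?drop0 //; lia. Qed.
End Intervals.

Lemma greedy_size_bounded B y : recurs_within F L.+1 B -> greedy y -> size y <= B + L + 1.
Proof.
move=> recB Gy; rewrite leqNgt; apply/negP => long.
have y_long : L < size y by lia.
have Fy := greedy_F Gy.
have [j window_le window] : exists2 j, j + L.+1 <= B & take L.+1 (drop j.+1 y) = take L.+1 y.
  have u_size : size (take L.+1 y) = L.+1 by rewrite size_takel.
  have w_size : size (take B (drop 1 y)) = B by rewrite size_takel // size_drop; lia.
  have Fw : F (take B (drop 1 y)).
    by apply: F_factor Fy _; apply: infix_trans (infix_take _ _) (infix_drop _ _).
  have Fu : F (take L.+1 y) by apply: F_factor Fy (infix_take _ _).
  have [j] := infix_window (recB _ Fu u_size _ Fw (eq_leq (esym w_size))).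
  rewrite u_size w_size => jB win; exists j => //.
  by rewrite -win -[j.+1]addn1 -drop_drop !take_drop take_takel //; lia.
have no_window := no_repeated_window (@greedy_interval_lt y) (@greedy_interval_end_uniq y)
  (@greedy_interval_start_uniq y) (greedy_interval_start Gy y_long)
  (greedy_interval_end Gy y_long) (greedy_interval_full Gy y_long).
apply: (no_window j.+1 L.+1); [lia|done|lia|].
by move=> p q; apply: greedy_interval_shift => //; lia.
Qed.
End GreedyCompletion.
End Words.

Theorem mainTheorem10 (A : finType) (F : wset A) :
  uniformly_recurrent F ->
  (forall X : wset A, bifix_code X -> wsubset X F -> F_thin F X -> wfinite X) /\
  (forall X : wset A, bifix_code X -> wsubset X F -> wfinite X ->
     exists Y : wset A, [/\ F_maximal_bifix F Y, wsubset X Y & wfinite Y]).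
Proof.
case=> _ F_factor _ F_recurrent; split=> [X _|X X_bifix X_F /wfinite_size_bound [L X_size]].
  exact: F_thin_finite.
have [B recB] := uniform_recurrence F_factor F_recurrent L.+1.
exists (greedy F X); split; [exact: greedy_maximal|exact: sub_greedy|].
exact: wfinite_size_bounded (fun y => greedy_size_bounded X_bifix X_F X_size F_factor recB).
Qed.
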